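(* Let $\Lambda\subseteq\mathbb Z^D$ be a lattice that induces a lattice tiling of the shape $\mathcal S$, and let $\delta=(d_1,\dots,d_D)$ be a nonzero ternary vector. Then $(\Lambda,\mathcal S,\delta)$ defines a folding if and only if both of the following hold: <ul> <li>$|\mathcal S|\delta-c(|\mathcal S|\delta)=(0,\dots,0)$;</li> <li>for every integer $i$ with $0<i<|\mathcal S|$, $i\delta-c(i\delta)\neq(0,\dots,0)$.</li> </ul> Here $i\delta=(id_1,\dots,id_D)$.
   Context: Let $D\ge 1$. A shape is a finite nonempty set $\mathcal S\subset\mathbb Z^D$ containing the origin; the origin is its distinguished center point. A lattice is a set $\Lambda=\{\sum_{j=1}^D u_jv_j : u_1,\dots,u_D\in\mathbb Z\}$ for linearly independent $v_1,\dots,v_D\in\mathbb Z^D$. The $D\times D$ matrix $G$ whose rows are $v_1,\dots,v_D$ is a generator matrix of $\Lambda$. $\Lambda$ induces a lattice tiling of $\mathcal S$ if the translates $\mathcal S+\lambda$, $\lambda\in\Lambda$, are pairwise disjoint and cover $\mathbb Z^D$. The translate $\mathcal S+\lambda$ is called the copy of $\mathcal S$ with center $\lambda$. For $x\in\mathbb Z^D$, $c(x)$ denotes the unique $\lambda\in\Lambda$ with $x\in\mathcal S+\lambda$. A ternary vector (direction) is a nonzero $\delta\in\{-1,0,+1\}^D$. The folded-row of $(\Lambda,\mathcal S,\delta)$ is the sequence $p_0,p_1,p_2,\dots$ defined by $p_0=0$ and $p_{k+1}=(p_k+\delta)-c(p_k+\delta)$. Equivalently, $p_{k+1}=p_k+\delta$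 if $p_k+\delta\in\mathcal S$; otherwise $p_{k+1}$ is $p_k+\delta$ minus the center of the copy of $\mathcal S$ containing $p_k+\delta$. The triple $(\Lambda,\mathcal S,\delta)$ defines a folding if every element of $\mathcal S$ occurs in its folded-row. *)

From HB Require Import structures.
From mathcomp Require Import all_boot all_order all_algebra.
From Stdlib Require Import ClassicalEpsilon.
Set Implicit Arguments. Unset Strict Implicit. Unset Printing Implicit Defensive.
Import Order.TTheory GRing.Theory Num.Theory.
Local Open Scope ring_scope.

Definition is_shape (D : nat) (S : seq 'rV[int]_D) : Prop :=
  uniq S /\ (0 : 'rV[int]_D) \in S.

Definition is_generator (D : nat) (G : 'M[int]_D) : Prop :=
  row_free (map_mx (fun z : int => z%:~R : rat) G).

Definition in_lattice (D : nat) (G : 'M[int]_D) (x : 'rV[int]_D) : Prop :=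
  exists u : 'rV[int]_D, x = u *m G.

Definition lattice_tiling (D : nat) (G : 'M[int]_D) (S : seq 'rV[int]_D) : Prop :=
  forall x : 'rV[int]_D, exists! l : 'rV[int]_D, in_lattice G l /\ (x - l) \in S.

(* c(x): the center of the copy of S containing x (unique under tiling). *)
Definition center (D : nat) (G : 'M[int]_D) (S : seq 'rV[int]_D) (x : 'rV[int]_D)
  : 'rV[int]_D :=
  epsilon (inhabits 0) (fun l => in_lattice G l /\ (x - l) \in S).

Definition ternary (D : nat) (d : 'rV[int]_D) : Prop :=
  d != 0 /\ forall j, d 0 j \in [:: -1; 0; 1].

Definition folded_row (D : nat) (G : 'M[int]_D) (S : seq 'rV[int]_D) (d : 'rV[int]_D)
  (k : nat) : 'rV[int]_D :=
  iter k (fun p => (p + d) - center G S (p + d)) 0.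

Definition defines_folding (D : nat) (G : 'M[int]_D) (S : seq 'rV[int]_D)
  (d : 'rV[int]_D) : Prop :=
  forall s, s \in S -> exists k, folded_row G S d k = s.

(* Write  r(x) = x - c(x)  for the residue of x: the point of the
   shape S representing the class of x modulo the lattice.  Because the tiling
   is unique, r(x) = r(y) exactly when x - y lies in the lattice, and r(x) = 0
   exactly when x lies in the lattice.  The folded row is then the sequence of
   residues p_k = r(k d).
   Hence the residues r(0), r(d), ..., r((N-1) d) are pairwise distinct as long
   as no  m d  with 0 < m < N  lies in the lattice, and once  m d  lies in the
   lattice (m > 0) every residue r(k d) is among the first m ones.  Since all
   residues lie in S, pigeonhole gives a least period  0 < m <= |S|  with  m d
   in the lattice.  The row is a folding iff its m distinct values exhaust S,
   i.e. iff m = |S|, which is exactly the condition of the theorem. *)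
From HB Require Import structures.
From mathcomp Require Import all_boot all_order all_algebra.
From Stdlib Require Import ClassicalEpsilon.
Import Order.TTheory GRing.Theory Num.Theory.
Local Open Scope ring_scope.
Set Implicit Arguments. Unset Strict Implicit.

Section Lattice.
Variables (D : nat) (G : 'M[int]_D).

Lemma in_lattice0 : in_lattice G 0.
Proof. by exists 0; rewrite mul0mx. Qed.

Lemma in_latticeD x y : in_lattice G x -> in_lattice G y -> in_lattice G (x + y).
Proof. by move=> [u ->] [v ->]; exists (u + v); rewrite mulmxDl. Qed.

Lemma in_latticeN x : in_lattice G x -> in_lattice G (- x).
Proof. by move=> [u ->]; exists (- u); rewrite mulNmx. Qed.

Lemma in_latticeB x y : in_lattice G x -> in_lattice G y -> in_lattice G (x - y).
Proof. by move=> hx hy; apply: in_latticeD => //; apply: in_latticeN. Qed.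

Lemma in_latticeMn x n : in_lattice G x -> in_lattice G (x *+ n).
Proof.
move=> hx; elim: n => [|n IH]; first by rewrite mulr0n; apply: in_lattice0.
by rewrite mulrS; apply: in_latticeD.
Qed.

End Lattice.

Section Residues.
Variables (D : nat) (G : 'M[int]_D) (S : seq 'rV[int]_D).
Hypothesis shapeS : is_shape S.
Hypothesis tiling : lattice_tiling G S.

Lemma center_spec x : in_lattice G (center G S x) /\ x - center G S x \in S.
Proof.
apply: (epsilon_spec (inhabits 0) (fun l => in_lattice G l /\ x - l \in S)).
by have [l [Hl _]] := tiling x; exists l.
Qed.

Lemma center_unique x l : in_lattice G l -> x - l \in S -> center G S x = l.
Proof.
move=> hl hs; have [l0 [_ Hu]] := tiling x.
by rewrite -(Hu _ (center_spec x)) (Hu l).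
Qed.

Definition residue (x : 'rV[int]_D) : 'rV[int]_D := x - center G S x.

Lemma residue_in_shape x : residue x \in S.
Proof. exact: (center_spec x).2. Qed.

Lemma residue_eq x y : residue x = residue y <-> in_lattice G (x - y).
Proof.
have [latx _] := center_spec x; have [laty Sy] := center_spec y.
split=> [E | lat_xy].
  have -> : x - y = center G S x - center G S y.
    rewrite -{1}(subrK (center G S x) x) -{1}(subrK (center G S y) y).
    by rewrite -/(residue x) -/(residue y) E opprD addrACA subrr add0r.
  exact: in_latticeB.
have shift : x - (center G S y + (x - y)) = residue y.
  by rewrite opprD opprB addrCA (addrC x) subrK addrC.
have Ecx : center G S x = center G S y + (x - y).
  by apply: center_unique; [exact: in_latticeD | rewrite shift].
by rewrite /residue Ecx shift.
Qed.

Lemma residue0 : residue 0 = 0.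
Proof.
have h00 : (0 : 'rV[int]_D) - 0 \in S by rewrite subr0; case: shapeS.
by rewrite /residue (center_unique (in_lattice0 G) h00) subr0.
Qed.

Lemma residue_eq0 x : residue x = 0 <-> in_lattice G x.
Proof. by rewrite -residue0 residue_eq subr0. Qed.

Variable d : 'rV[int]_D.

Lemma folded_row_residue k : folded_row G S d k = residue (d *+ k).
Proof.
elim: k => [|k IH]; first by rewrite /folded_row /= mulr0n residue0.
rewrite /folded_row iterS -/(folded_row G S d k) IH -/(residue (residue _ + d)).
apply/residue_eq.
have -> : residue (d *+ k) + d - d *+ k.+1 = - center G S (d *+ k).
  by rewrite mulrSr /residue opprD addrACA subrr addr0 addrAC subrr add0r.
exact/in_latticeN/(center_spec _).1.
Qed.

Definition residues (N : nat) : seq 'rV[int]_D :=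
  [seq residue (d *+ i) | i <- iota 0 N].

Lemma size_residues N : size (residues N) = N.
Proof. by rewrite size_map size_iota. Qed.

Lemma residues_sub N : {subset residues N <= S}.
Proof. by move=> x /mapP [i _ ->]; apply: residue_in_shape. Qed.

Lemma residues_uniq N :
  (forall m, (0 < m < N)%N -> ~ in_lattice G (d *+ m)) -> uniq (residues N).
Proof.
move=> noper; rewrite map_inj_in_uniq ?iota_uniq //.
suff lt_distinct i j : (i < j < N)%N -> residue (d *+ i) = residue (d *+ j) -> False.
  move=> i j; rewrite !mem_iota !add0n => /andP[_ hi] /andP[_ hj] E.
  by case: (ltngtP i j) => // hij; [case: (lt_distinct i j) | case: (lt_distinct j i)];
     rewrite ?hij.
move=> /andP[hij hj] /esym /residue_eq E.
apply: (noper (j - i)%N); first by rewrite subn_gt0 hij (leq_ltn_trans (leq_subr _ _)).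
by rewrite mulrnBr // ltnW.
Qed.

Lemma residues_periodic m k :
  (0 < m)%N -> in_lattice G (d *+ m) -> residue (d *+ k) \in residues m.
Proof.
move=> m_gt0 latm; apply/mapP; exists (k %% m)%N.
  by rewrite mem_iota add0n ltn_pmod.
apply/residue_eq; rewrite {1}(divn_eq k m) mulrnDr addrK mulnC mulrnA.
exact: in_latticeMn.
Qed.

(* Pigeonhole: some multiple  m d  with  0 < m <= |S|  lies in the lattice,
   since the |S|+1 residues r(0), ..., r(|S| d) all lie in S. *)
Lemma exists_period :
  exists2 m, (0 < m <= size S)%N & residue (d *+ m) == 0.
Proof.
case: (boolP (has (fun m => residue (d *+ m) == 0) (iota 1 (size S)))).
  by case/hasP => m; rewrite mem_iota add1n ltnS; exists m.
move/hasPn => noper; exfalso.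
suff: uniq (residues (size S).+1).
  by move/uniq_leq_size/(_ (@residues_sub _)); rewrite size_residues ltnn.
apply: residues_uniq => m /andP[m_gt0 hm] /residue_eq0 zm.
by move: (noper m); rewrite mem_iota m_gt0 add1n hm zm eqxx => /(_ isT).
Qed.

Lemma exists_least_period :
  exists m, [/\ (0 < m <= size S)%N, residue (d *+ m) = 0 &
                forall i, (0 < i < m)%N -> residue (d *+ i) != 0].
Proof.
pose period m := (0 < m)%N && (residue (d *+ m) == 0).
have [m0 /andP[m0_gt0 m0_le] zm0] := exists_period.
have /ex_minnP[m /andP[m_gt0 /eqP zm] least] : exists m, period m.
  by exists m0; apply/andP.
exists m; split=> //.
  by rewrite m_gt0 (leq_trans _ m0_le) // least // /period m0_gt0.
move=> i /andP[i_gt0 lt_im]; apply: contraTN lt_im => zi.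
by rewrite -leqNgt least // /period i_gt0.
Qed.

Lemma folding_of_residues N : {subset S <= residues N} -> defines_folding G S d.
Proof.
move=> covered s /covered /mapP [k _ ->].
by exists k; rewrite folded_row_residue.
Qed.

Lemma residues_of_folding m :
  (0 < m)%N -> residue (d *+ m) = 0 -> defines_folding G S d ->
  {subset S <= residues m}.
Proof.
move=> m_gt0 /residue_eq0 latm fold s /fold [k <-].
by rewrite folded_row_residue residues_periodic.
Qed.

End Residues.

Theorem lemma3 (D : nat) (G : 'M[int]_D) (S : seq 'rV[int]_D) (d : 'rV[int]_D) :
  (0 < D)%N -> is_generator G -> is_shape S -> lattice_tiling G S -> ternary d ->
  (defines_folding G S d <->
   (d *+ size S - center G S (d *+ size S) = 0 /\
    forall i : nat, (0 < i < size S)%N -> d *+ i - center G S (d *+ i) != 0)).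
Proof.
move=> _ _ shapeS tiling _.
have uniqS : uniq S by case: shapeS.
change (defines_folding G S d <->
  residue G S (d *+ size S) = 0 /\
  forall i, (0 < i < size S)%N -> residue G S (d *+ i) != 0).
split=> [fold | [zS noperS]].
- have [m [/andP[m_gt0 m_le] zm least]] := exists_least_period shapeS tiling d.
  have S_le : (size S <= m)%N.
    rewrite -(size_residues G S d m).
    exact: uniq_leq_size uniqS (residues_of_folding shapeS tiling m_gt0 zm fold).
  have -> : size S = m by apply/eqP; rewrite eqn_leq S_le m_le.
  by split.
- apply: (folding_of_residues shapeS tiling (N := size S)).
  have uniqR : uniq (residues G S d (size S)).
    apply: (residues_uniq tiling) => m /noperS + /(residue_eq0 shapeS tiling) zm.
    by rewrite zm eqxx.
  have sizeR : (size S <= size (residues G S d (size S)))%N.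
    by rewrite size_residues.
  have [_ sameR] := uniq_min_size uniqR (@residues_sub _ _ _ tiling d _) sizeR.
  by move=> s; rewrite sameR.
Qed.
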